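(* Let $q\geq2$, $\mathsf{BD}_{2q}=\langle b,c\mid (bc)^2=b^2=c^q\rangle$ (order $4q$), and for $1\le t\le q-1$ let $\rho_t\colon\mathsf{BD}_{2q}\to\mathrm{GL}(2,\mathbb{C})$ be $\rho_t(b)=\begin{pmatrix}0&1\\(-1)^t&0\end{pmatrix}$, $\rho_t(c)=\begin{pmatrix}\zeta_{2q}^t&0\\0&\zeta_{2q}^{-t}\end{pmatrix}$, $\zeta_{2q}=e^{\pi i/q}$. Let $M=\mathbb{S}^3/\rho_1(\mathsf{BD}_{2q})$. Then $$\tilde\xi_{\rho_t}(D)=\frac{1}{4q}\left(t^2-2qt-2q\right).$$
   Context: For a spherical $3$-manifold $M=\mathbb{S}^3/\varsigma(\Gamma)$, with $\varsigma\colon\Gamma\to\mathrm{U}(2)$ faithful and fixed-point free, and a representation $\rho\colon\Gamma\to\mathrm{U}(k)$, $\tilde\xi_\rho(D)=\xi(D_\rho)-k\,\xi(D)$ is the reduced Atiyah–Patodi–Singer $\xi$-invariant of the Dirac operator $D$ of $M$ twisted by the flat bundle of $\rho$ (here $\xi=(h+\eta)/2$, $h$ the dimension of the kernel, $\eta$ the eta-invariant). It is known to satisfy $\tilde\xi_\rho(D)=\frac{1}{|\Gamma|}\sum_{g\neq1}(\mathrm{Tr}\rho(g)-k)\,\mathrm{def}(\varsigma(g))$, with $\mathrm{def}(A)=\frac{\sqrt{\det A}}{1-\mathrm{Tr}A+\det A}$; for $\varsigma=\rho_1$ (values in $\mathrm{SU}(2)$) the square root is $1$. *)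

From mathcomp Require Import all_boot all_order all_algebra all_fingroup all_solvable all_field all_character.
Set Implicit Arguments. Unset Strict Implicit. Unset Printing Implicit Defensive.
Import GRing.Theory Num.Theory.
Local Open Scope ring_scope.

(* zeta_{2q} = e^{pi i/q}: q.-root (-1) is the q-th root of -1 of minimal
   nonnegative argument, i.e. exp(pi i / q). *)
Definition zeta2q (q : nat) : algC := q.-root (-1).

Definition BDb (t : nat) : 'M[algC]_2 :=
  \matrix_(i < 2, j < 2)
    if (i == 0 :> nat) && (j == 1 :> nat) then 1
    else if (i == 1 :> nat) && (j == 0 :> nat) then (-1) ^+ t else 0.

Definition BDc (z : algC) (t : nat) : 'M[algC]_2 :=
  \matrix_(i < 2, j < 2)
    if i == j then (if (i == 0 :> nat) then z ^+ t else (z ^+ t)^-1) else 0.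

Definition defect (A : 'M[algC]_2) : algC :=
  sqrtC (\det A) / (1 - \tr A + \det A).

(* reduced xi-invariant via the equivariant formula of the context:
   (1/|G|) sum_{g <> 1} (Tr rho(g) - k) def(vs(g)) *)
Definition xi_tilde (gT : finGroupType) (G : {set gT}) (k : nat)
  (vs : gT -> 'M[algC]_2) (rho : gT -> 'M[algC]_k) : algC :=
  (#|G|%:R)^-1 * \sum_(g in G | g != 1%g) (\tr (rho g) - k%:R) * defect (vs g).

(* Every element of the group is one of the 4q distinct words b^e c^k
   (e < 2, k < 2q).  On the 2q words b c^k, rho_t has trace 0 while rho_1 has trace 0
   and determinant 1, so each contributes -1.  On c^k, with w = zeta^k, the summand is
   (w^t + w^-t - 2) / (2 - w - w^-1) = -|1 + w + ... + w^(t-1)|^2, and orthogonality of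
   the characters of the cyclic group of order 2q gives
   sum_k |1 + w + ... + w^(t-1)|^2 = 2qt, whose k = 0 term is t^2.  The one delicate
   point is that q.-root (-1), the q-th root of -1 of least argument, is a primitive
   2q-th root of unity. *)

From mathcomp Require Import all_boot all_order all_algebra all_fingroup all_solvable all_field all_character.
From mathcomp Require Import ring zify.
Set Implicit Arguments. Unset Strict Implicit. Unset Printing Implicit Defensive.
Import Order.TTheory GRing.Theory Num.Theory.
Local Open Scope ring_scope.

Definition gsum {R : pzSemiRingType} (t : nat) (x : R) : R := \sum_(i < t) x ^+ i.

Lemma subr1_gsum {R : comPzRingType} t (x : R) : 1 - x ^+ t = (1 - x) * gsum t x.
Proof. by rewrite -opprB subrX1 -mulNr opprB. Qed.

Lemma gsum1 {R : pzSemiRingType} t : gsum t (1 : R) = t%:R.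
Proof. by rewrite /gsum; under eq_bigr do rewrite expr1n; rewrite sumr_const card_ord. Qed.

Lemma sum_expr_unity (R : idomainType) N (c : R) : c ^+ N = 1 ->
  \sum_(j < N) c ^+ j = if c == 1 then N%:R else 0.
Proof.
case: eqP => [->|/eqP c1 cN]; first by rewrite -/(gsum N 1) gsum1.
apply/eqP; move: (subrX1 c N); rewrite cN subrr => /esym/eqP.
by rewrite mulf_eq0 subr_eq0 (negbTE c1).
Qed.

Lemma sum_gsum_mulV (F : fieldType) N t (w y : F) :
  N.-primitive_root w -> y != 0 -> (t <= N)%N ->
  \sum_(j < N) gsum t (y * w ^+ j) * gsum t (y * w ^+ j)^-1 = (N * t)%:R.
Proof.
move=> wN y0 tN; have w0 : w != 0 by rewrite (prim_root_eq0 wN) -lt0n (prim_order_gt0 wN).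
have expr_term i l j : (y * w ^+ j) ^+ i * (y * w ^+ j)^-1 ^+ l
    = y ^+ i * y^-1 ^+ l * (w ^+ i * w^-1 ^+ l) ^+ j.
  by rewrite invfM !exprMn -!exprM -!exprVn -!exprM mulnC [(l * j)%N]mulnC; ring.
have orth (i l : 'I_t) : \sum_(j < N) (w ^+ i * w^-1 ^+ l) ^+ j = if i == l then N%:R else 0.
  rewrite sum_expr_unity; last first.
    by rewrite exprMn -!exprM !(mulnC _ N) !exprM exprVn (prim_expr_order wN) invr1 !expr1n mulr1.
  have wl0 := expf_neq0 l w0.
  rewrite exprVn -(inj_eq (mulIf wl0)) divfK // mul1r (eq_prim_root_expr wN).
  by rewrite !modn_small ?(leq_trans (ltn_ord _) tN).
have diag (i : 'I_t) :
    \sum_(l < t) y ^+ i * y^-1 ^+ l * \sum_(j < N) (w ^+ i * w^-1 ^+ l) ^+ j = N%:R.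
  rewrite (bigD1 i) //= orth eqxx -exprMn mulfV // expr1n mul1r.
  rewrite [X in _ + X]big1 ?addr0 // => l li.
  by rewrite orth eq_sym (negbTE li) mulr0.
under eq_bigr do rewrite /gsum big_distrlr /=.
under eq_bigr do under eq_bigr do under eq_bigr do rewrite expr_term.
rewrite exchange_big; under eq_bigr do rewrite exchange_big /=.
under eq_bigr do under eq_bigr do rewrite -mulr_sumr.
by under eq_bigr do rewrite diag; rewrite sumr_const card_ord natrM mulr_natr.
Qed.

Lemma ratio_trace_gsum (F : fieldType) t (w : F) : w != 0 -> w != 1 ->
  (w ^+ t + (w ^+ t)^-1 - 2%:R) * (1 - (w + w^-1) + 1)^-1 = - (gsum t w * gsum t w^-1).
Proof.
move=> w0 w1; have wt0 : w ^+ t != 0 := expf_neq0 t w0.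
have num : w ^+ t + (w ^+ t)^-1 - 2%:R = - ((1 - w ^+ t) * (1 - (w ^+ t)^-1)).
  by rewrite mulrBr !mulrBl mulfV // !mul1r mulr1; ring.
have den : 1 - (w + w^-1) + 1 = (1 - w) * (1 - w^-1).
  by rewrite mulrBr !mulrBl mulfV // !mul1r mulr1; ring.
rewrite num den subr1_gsum -exprVn subr1_gsum.
by field; rewrite w0 !subr_eq0 w1 eq_sym w1.
Qed.

Lemma sum_ratio_trace_prim (F : fieldType) N t (z : F) :
  N.-primitive_root z -> (t <= N)%N ->
  \sum_(k < N | (0 < k)%N)
     ((z ^+ k) ^+ t + ((z ^+ k) ^+ t)^-1 - 2%:R) * (1 - (z ^+ k + (z ^+ k)^-1) + 1)^-1
  = t%:R ^+ 2 - (N * t)%:R.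
Proof.
move=> zN tN; have z0 : z != 0 by rewrite (prim_root_eq0 zN) -lt0n (prim_order_gt0 zN).
have k0 : (0 < N)%N := prim_order_gt0 zN.
under eq_bigr => k k_gt0.
  rewrite ratio_trace_gsum ?expf_neq0 //; last first.
    by rewrite -(prim_order_dvd zN) gtnNdvd.
  over.
have parseval : \sum_(k < N) gsum t (z ^+ k) * gsum t (z ^+ k)^-1 = (N * t)%:R.
  by under eq_bigr do rewrite -[z ^+ _]mul1r; apply: sum_gsum_mulV; rewrite ?oner_neq0.
rewrite (eq_bigl (fun k : 'I_N => k != Ordinal k0)) => [|k]; last first.
  by rewrite lt0n; congr (~~ _); apply/eqP/eqP => [->|/val_inj].
move: parseval; rewrite (bigD1 (Ordinal k0)) //= expr0 invr1 gsum1 -expr2.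
by move=> parseval; rewrite sumrN -parseval opprD addNKr.
Qed.

Section UnitCircle.
Context {C : numClosedFieldType}.
Implicit Types y : C.

Lemma sqr_norm_1subr y : `|y| = 1 -> `|1 - y| ^+ 2 = 2 - 2 * 'Re y.
Proof.
move=> y1; rewrite normCK rmorphB /= conjC1 ReE mulrBr !mulrBl !mul1r mulr1.
by rewrite -normCK y1 expr1n; field.
Qed.

Lemma gsum_mulV_norm t y : `|y| = 1 -> gsum t y * gsum t y^-1 = `|gsum t y| ^+ 2.
Proof.
move=> y1; rewrite normCK invC_norm y1 expr1n invr1 mul1r; congr (_ * _).
by rewrite rmorph_sum; apply: eq_bigr => i _; rewrite rmorphXn.
Qed.

Lemma norm_rootN1 q y : (0 < q)%N -> y ^+ q = -1 -> `|y| = 1.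
Proof.
move=> q_gt0 yq; apply/eqP; rewrite -(pexpr_eq1 q_gt0) ?normr_ge0 //.
by rewrite -normrX yq normrN normr1.
Qed.

Lemma rootCN1_Re_max q y : (0 < q)%N -> y ^+ q = -1 -> 'Re y <= 'Re (q.-root (-1 : C)).
Proof.
move=> q_gt0 yq; have [Im_ge0|Im_lt0] := real_ge0P (Creal_Im y).
  exact: rootC_Re_max.
rewrite -Re_conj; apply: rootC_Re_max => //; first by rewrite -rmorphXn /= yq rmorphN1.
by rewrite Im_conj oppr_ge0 ltW.
Qed.

End UnitCircle.

(* Each m-th root y of z := (mn).-root (-1) is a (mn)-th root of -1, so the maximality
   of Re z gives |1 - z| <= |1 - y|, i.e. |gsum m y| <= 1 as 1 - z = (1 - y) gsum m y;
   but over the m roots y these values have mean square m by [sum_gsum_mulV]. *)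
Lemma zeta2q_expr_neqN1 m n : (0 < n)%N -> (1 < m)%N -> zeta2q (m * n) ^+ n != -1.
Proof.
move=> n_gt0 m_gt1; apply/eqP => zn.
have m_gt0 : (0 < m)%N by apply: ltnW.
have q_gt0 : (0 < m * n)%N by rewrite muln_gt0 m_gt0.
set z := zeta2q (m * n) in zn.
have z1 : 1 - z != 0.
  rewrite subr_eq0; apply/eqP => z_eq1; move: zn; rewrite -z_eq1 expr1n => /eqP.
  by rewrite eq_sym eqNr oner_eq0.
have z0 : z != 0.
  apply/eqP => z_eq0; move: zn; rewrite z_eq0 expr0n gtn_eqF // => /eqP.
  by rewrite eq_sym oppr_eq0 oner_eq0.
have [w w_prim] := C_prim_root_exists m_gt0.
pose y j := m.-root z * w ^+ j.
have y_m j : y j ^+ m = z.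
  by rewrite exprMn rootCK // -exprM mulnC exprM (prim_expr_order w_prim) expr1n mulr1.
have y_q j : y j ^+ (m * n) = -1 by rewrite exprM y_m.
have y_norm j : `|y j| = 1 := norm_rootN1 q_gt0 (y_q j).
have le_norm_1subr j : `|1 - z| <= `|1 - y j|.
  rewrite -(ler_pXn2r (isT : (0 < 2)%N)) ?nnegrE ?normr_ge0 //.
  rewrite !sqr_norm_1subr ?(norm_rootN1 q_gt0 (rootCK _ _)) //.
  by rewrite lerD2l lerN2 ler_pM2l ?ltr0n // (rootCN1_Re_max q_gt0 (y_q j)).
have gsum_le1 j : `|gsum m (y j)| <= 1.
  have y1 : 0 < `|1 - y j| by apply: lt_le_trans (le_norm_1subr j); rewrite normr_gt0.
  rewrite -(ler_pM2l y1) mulr1 -normrM -subr1_gsum y_m; exact: le_norm_1subr.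
have root_z0 : m.-root z != 0 by rewrite rootC_eq0.
have parseval := sum_gsum_mulV w_prim root_z0 (leqnn m).
have : ((m * m)%:R : algC) <= \sum_(j < m) (1 : algC).
  rewrite -parseval; apply: ler_sum => j _.
  by rewrite gsum_mulV_norm ?y_norm // exprn_ile1 ?normr_ge0 ?(gsum_le1 j).
rewrite sumr_const card_ord ler_nat; nia.
Qed.

Lemma zeta2q_prim q : (0 < q)%N -> (2 * q).-primitive_root (zeta2q q).
Proof.
move=> q_gt0; set z := zeta2q q.
have zq : z ^+ q = -1 by rewrite rootCK.
have z2q : z ^+ (2 * q) = 1 by rewrite mulnC exprM zq sqrrN expr1n.
have q2_gt0 : (0 < 2 * q)%N by rewrite muln_gt0.
have [d d_prim] := prim_order_exists q2_gt0 z2q.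
case/dvdnP=> r def_2q.
have Ndvd_d_q : ~~ (d %| q)%N by rewrite (prim_order_dvd d_prim) zq eqNr oner_eq0.
have [n def_d] : exists n, d = (2 * n)%N.
  have [d_odd|d_even] := boolP (odd d); last first.
    by exists d./2; rewrite -{1}(odd_double_half d) (negbTE d_even) -mul2n.
  have r_even : ~~ odd r by move: (congr1 odd def_2q); rewrite !oddM d_odd andbT /= => <-.
  case/negP: Ndvd_d_q; apply/dvdnP; exists r./2.
  move: def_2q; rewrite -{1}(odd_double_half r) (negbTE r_even) -mul2n; lia.
have n_gt0 : (0 < n)%N by nia.
have zn : z ^+ n = -1.
  have : (z ^+ n) ^+ 2 == 1 by rewrite -exprM mulnC -def_d (prim_expr_order d_prim).
  rewrite sqrf_eq1 => /orP[zn1|/eqP //]; exfalso.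
  by move: zn1; rewrite -(prim_order_dvd d_prim) def_d => /(dvdn_leq n_gt0); lia.
have def_q : q = (r * n)%N by nia.
have [r_gt1|r_le1] := ltnP 1 r.
  by case/negP: (zeta2q_expr_neqN1 n_gt0 r_gt1); rewrite -def_q zn.
have r_gt0 : (0 < r)%N by move: q_gt0; rewrite def_q muln_gt0 => /andP[].
by rewrite def_2q (_ : r = 1%N) ?mul1n //; lia.
Qed.

Lemma ord2P (i : 'I_2) : i = 0 \/ i = 1.
Proof. by case: i => [[|[|//]] i_lt2]; [left|right]; apply/val_inj. Qed.

Lemma mxtrace2 (R : pzRingType) (A : 'M[R]_2) : \tr A = A 0 0 + A 1 1.
Proof.
by rewrite /mxtrace !big_ord_recr big_ord0 /= add0r; congr (A _ _ + A _ _); apply: val_inj.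
Qed.

Lemma det_mx2 (R : comPzRingType) (A : 'M[R]_2) : \det A = A 0 0 * A 1 1 - A 0 1 * A 1 0.
Proof.
rewrite (expand_det_row _ 0) !big_ord_recr big_ord0 /= add0r /cofactor !det_mx11 !mxE /=.
have -> : widen_ord (leqnSn 1) ord_max = 0 :> 'I_2 by apply: val_inj.
have -> : ord_max = 1 :> 'I_2 by apply: val_inj.
have -> : lift 0 0 = 1 :> 'I_2 by apply: val_inj.
have -> : lift 1 0 = 0 :> 'I_2 by apply: val_inj.
by rewrite expr0 expr1 !mul1r mulN1r mulrN.
Qed.

Lemma mulmx_BDc z s s' : BDc z s *m BDc z s' = BDc z (s + s').
Proof.
apply/matrixP => i j; rewrite !mxE !big_ord_recr big_ord0 /= add0r !mxE.
case: (ord2P i) => ->; case: (ord2P j) => -> /=;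
  by rewrite ?mulr0 ?mul0r ?addr0 ?add0r // exprD // invfM.
Qed.

Lemma BDc0 z : BDc z 0 = 1.
Proof.
apply/matrixP => i j; rewrite !mxE.
by case: (ord2P i) => ->; case: (ord2P j) => -> /=; rewrite ?invr1.
Qed.

Lemma BDcX z s k : BDc z s ^+ k = BDc z (s * k).
Proof.
elim: k => [|k IHk]; first by rewrite muln0 BDc0.
by rewrite exprS IHk -mulmxE mulmx_BDc mulnS.
Qed.

Lemma mxtrace_BDc z s : \tr (BDc z s) = z ^+ s + (z ^+ s)^-1.
Proof. by rewrite mxtrace2 !mxE. Qed.

Lemma det_BDc z s : z != 0 -> \det (BDc z s) = 1.
Proof. by move=> z0; rewrite det_mx2 !mxE /= mulr0 subr0 divff // expf_neq0. Qed.

Lemma mxtrace_BDb_BDc t z s : \tr (BDb t *m BDc z s) = 0.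
Proof. by rewrite mxtrace2 !mxE !big_ord_recr !big_ord0 /= !mxE /= !(mulr0, mul0r, addr0). Qed.

Lemma det_BDb1 : \det (BDb 1) = 1.
Proof. by rewrite det_mx2 !mxE /= mulr0 sub0r mulrN1 opprK. Qed.

Lemma defect_BDc z s : z != 0 -> defect (BDc z s) = (1 - (z ^+ s + (z ^+ s)^-1) + 1)^-1.
Proof. by move=> z0; rewrite /defect det_BDc // sqrtC1 mxtrace_BDc mul1r. Qed.

Lemma defect_BDb1_BDc z s : z != 0 -> defect (BDb 1 *m BDc z s) = 2^-1.
Proof.
move=> z0; rewrite /defect det_mulmx det_BDb1 det_BDc // mulr1 sqrtC1 mxtrace_BDb_BDc.
by rewrite subr0 mul1r.
Qed.

Lemma repr_BDcX (gT : finGroupType) (G : {group gT}) (rG : gT -> 'M_2) c z s k :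
  mx_repr G rG -> c \in G -> rG c = BDc z s -> rG (c ^+ k)%g = BDc z (s * k).
Proof.
move=> rGG cG rGc; transitivity (MxRepresentation rGG (c ^+ k)%g) => //.
by rewrite repr_mxX //= rGc BDcX.
Qed.

Lemma repr_mul_BDcX (gT : finGroupType) (G : {group gT}) (rG : gT -> 'M_2) b c z s k :
  mx_repr G rG -> b \in G -> c \in G -> rG c = BDc z s ->
  rG (b * c ^+ k)%g = rG b *m BDc z (s * k).
Proof. by move=> rGG bG cG rGc; rewrite (proj2 rGG) ?groupX // (repr_BDcX k rGG cG rGc). Qed.

Section BinaryDihedral.
Variables (gT : finGroupType) (b c : gT) (q : nat).
Hypotheses (bc2 : ((b * c) ^+ 2 = b ^+ 2)%g) (b2 : (b ^+ 2 = c ^+ q)%g).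
Local Open Scope group_scope.

Lemma mulcb : c * b = b * c^-1.
Proof.
have : b * (c * b * c) = b * b by move: bc2; rewrite !expgS !expg0 !mulg1 !mulgA.
by move/mulgI => cbc_b; rewrite -[in RHS]cbc_b mulgK.
Qed.

Lemma mulXcb i : c ^+ i * b = b * c ^- i.
Proof.
elim: i => [|i IHi]; first by rewrite !expg0 invg1 mul1g mulg1.
by rewrite expgSr -mulgA mulcb mulgA IHi -mulgA -invMg -expgS -expgSr.
Qed.

Lemma expc_2q : c ^+ (2 * q) = 1.
Proof.
have b2b : b * b ^+ 2 = b ^+ 2 * b by rewrite -expgS -expgSr.
have := mulXcb q; rewrite -b2 -b2b => /mulgI b2V.
by rewrite mul2n -addnn expgD -{1}b2 b2V -b2 mulVg.
Qed.

Definition bd_elt (p : bool * 'I_(2 * q)) : gT := (if p.1 then b else 1) * c ^+ p.2.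

Hypothesis q_gt0 : (0 < q)%N.

Lemma mem_bd_elt e k : (if e then b else 1) * c ^+ k \in bd_elt @: setT.
Proof.
have q2_gt0 : (0 < 2 * q)%N by rewrite muln_gt0.
apply/imsetP; exists (e, Ordinal (ltn_pmod k q2_gt0)); first by rewrite inE.
by rewrite /bd_elt /= expg_mod // expc_2q.
Qed.

Lemma group_set_bd : group_set (bd_elt @: setT).
Proof.
apply/group_setP; split; first by have := mem_bd_elt false 0; rewrite mul1g expg0.
move=> _ _ /imsetP[[e1 k1] _ ->] /imsetP[[e2 k2] _ ->]; rewrite /bd_elt /=.
case: e2; last by rewrite mul1g -mulgA -expgD mem_bd_elt.
rewrite mulgA -(mulgA _ (c ^+ k1)) mulXcb mulgA -expgVn.
have -> : c^-1 = c ^+ (2 * q).-1.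
  by apply: (mulgI c); rewrite mulgV -expgS prednK ?expc_2q // muln_gt0.
rewrite -expgM -!mulgA -expgD.
case: e1; last by rewrite mul1g (mem_bd_elt true).
by rewrite mulgA -expg2 b2 -expgD -(mul1g (c ^+ _)) (mem_bd_elt false).
Qed.

Variable G : {group gT}.
Hypotheses (G_gen : G :=: <<[set b; c]>>) (card_G : #|G| = (4 * q)%N).

Lemma G_bd : G :=: bd_elt @: setT.
Proof.
apply/eqP; rewrite eqEsubset G_gen (gen_subG _ (Group group_set_bd)) /=.
apply/andP; split.
  apply/subsetP => x; rewrite !inE => /orP[]/eqP->.
    by rewrite -[b]mulg1 -(expg0 c) (mem_bd_elt true).
  by rewrite -[c]mul1g -(expg1 c) (mem_bd_elt false).
apply/subsetP => _ /imsetP[[e k] _ ->]; rewrite /bd_elt /=.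
by apply: groupM; [case: e | apply: groupX]; rewrite ?group1 // mem_gen // !inE eqxx ?orbT.
Qed.

Lemma bd_elt_inj : injective bd_elt.
Proof.
have /imset_injP bd_inj : #|bd_elt @: setT| == #|[set: bool * 'I_(2 * q)]|.
  by rewrite -G_bd card_G cardsT card_prod card_bool card_ord mulnA.
by move=> x y; apply: bd_inj; rewrite inE.
Qed.

Lemma sum_bd (F : gT -> algC) :
  \sum_(g in G | g != 1%g) F g
  = \sum_(k < 2 * q) F (b * c ^+ k)%g + \sum_(k < 2 * q | (0 < k)%N) F (c ^+ k)%g.
Proof.
have q2_gt0 : (0 < 2 * q)%N by rewrite muln_gt0.
have bd_neq1 p : (bd_elt p != 1) = (p != (false, Ordinal q2_gt0)).
  by rewrite -(inj_eq bd_elt_inj) /bd_elt /= mul1g expg0.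
rewrite G_bd big_imset_cond /=; last by move=> x y _ _; apply: bd_elt_inj.
rewrite big_mkcond (big_mkcond (fun k : 'I_(2 * q) => 0 < k)%N).
transitivity (\sum_(e : bool) \sum_(k < 2 * q)
    (if bd_elt (e, k) != 1%g then F (bd_elt (e, k)) else 0)).
  by rewrite pair_bigA; apply: eq_big => -[e k] //; rewrite inE.
rewrite big_bool /=; congr (_ + _); apply: eq_bigr => k _; rewrite bd_neq1 /bd_elt /= ?mul1g //.
by rewrite xpair_eqE /= lt0n.
Qed.
End BinaryDihedral.

Theorem proposition5p7 (q : nat) (hq : (2 <= q)%N)
  (gT : finGroupType) (G : {group gT}) (b c : gT)
  (hgen : G :=: <<[set b; c]>>%g)
  (hrel1 : ((b * c) ^+ 2 = b ^+ 2)%g) (hrel2 : (b ^+ 2 = c ^+ q)%g)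
  (hord : #|G| = (4 * q)%N)
  (rho1 : gT -> 'M[algC]_2) (hrho1 : mx_repr G rho1)
  (hrho1b : rho1 b = BDb 1) (hrho1c : rho1 c = BDc (zeta2q q) 1)
  (t : nat) (ht1 : (1 <= t)%N) (ht2 : (t <= q - 1)%N)
  (rhot : gT -> 'M[algC]_2) (hrhot : mx_repr G rhot)
  (hrhotb : rhot b = BDb t) (hrhotc : rhot c = BDc (zeta2q q) t) :
  xi_tilde G rho1 rhot
  = ((t%:R) ^+ 2 - 2 * q%:R * t%:R - 2 * q%:R) / (4 * q%:R).
Proof.
have q_gt0 : (0 < q)%N := ltnW hq.
set z := zeta2q q in hrho1c hrhotc *.
have z_prim : (2 * q).-primitive_root z := zeta2q_prim q_gt0.
have z0 : z != 0 by rewrite (prim_root_eq0 z_prim) -lt0n muln_gt0.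
have bG : b \in G by rewrite hgen mem_gen // !inE eqxx.
have cG : c \in G by rewrite hgen mem_gen // !inE eqxx orbT.
rewrite /xi_tilde hord (sum_bd hrel1 hrel2 q_gt0 hgen hord).
have b_part : \sum_(k < 2 * q) (\tr (rhot (b * c ^+ k)%g) - 2%:R) * defect (rho1 (b * c ^+ k)%g)
    = - (2 * q)%:R.
  under eq_bigr => k _ do rewrite (repr_mul_BDcX _ hrhot bG cG hrhotc)
    (repr_mul_BDcX _ hrho1 bG cG hrho1c) hrhotb hrho1b mxtrace_BDb_BDc
    defect_BDb1_BDc // sub0r mulNr divff ?pnatr_eq0 //.
  by rewrite sumrN sumr_const card_ord.
have c_part : \sum_(k < 2 * q | (0 < k)%N)
    (\tr (rhot (c ^+ k)%g) - 2%:R) * defect (rho1 (c ^+ k)%g) = t%:R ^+ 2 - (2 * q * t)%:R.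
  rewrite -(sum_ratio_trace_prim z_prim); last by lia.
  apply: eq_bigr => k _; rewrite (repr_BDcX _ hrhot cG hrhotc) (repr_BDcX _ hrho1 cG hrho1c).
  by rewrite mxtrace_BDc defect_BDc // mul1n mulnC exprM.
rewrite b_part c_part !natrM.
by field; rewrite pnatr_eq0 -lt0n.
Qed.
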